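(* Fix $\varepsilon>0$ and $R>1$. There is a constant $\lambda_0$ depending only on $\varepsilon$ and $R$, with $\lambda_0=\mathcal{O}(\varepsilon^{-1})$ for fixed $R$, such that for every $\lambda\ge\lambda_0$, every finite nonempty $V\subset\mathbb{R}^d$ and every hierarchy $(\mathcal{T},R)$ on $V$ satisfying the separation property, the initial spanner $\mathcal{S}_0$ (with parameter $\lambda$), viewed as a graph on $V$, is a $(1+\varepsilon)$-spanner of $V$: for all $p,q\in V$ the shortest-path distance in $\mathcal{S}_0$ between $p$ and $q$ is at most $(1+\varepsilon)\lVert pq\rVert$.
   Context: $\lVert xy\rVert$ and $d(x,y)$ denote Euclidean distance. Hierarchy: given $R>1$ and a finite $V\subset\mathbb{R}^d$, a hierarchy $(\mathcal{T},R)$ is a finite rooted tree $\mathcal{T}$ whose nodes, called explicit clusters, are distinct pairs $(p,l)$ with center $p\in V$ and level $l\in\mathbb{Z}$; a cluster $(p,l)$ covers the ball of radius $R^l$ around $p$; every non-root cluster $(p,l)$ has a parent of level $l+1$ whose center $q$ satisfies $d(p,q)\le R^{l+1}$; every point of $V$ is the center of at least one explicit cluster. For every explicit cluster $(p,l)$ and every integer $l'<l$, the pair $(p,l')$ is an implicit cluster; the clusters of the hierarchy are the explicit and implicit ones. Separation property: for any two clusters $(p,l),(q,l)$ of the same level with $p\neq q$, $d(p,q)>R^l$. Initial spanner $\mathcal{S}_0$ with parameter $\lambda>0$: the graph whose vertices are the clusters, with a type I edge between any two clusters $(p,l),(q,l)$ of the same level with $p\ne q$ and $d(p,q)\le\lambda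 R^l$, and a type II edge between every explicit cluster and each of its children in $\mathcal{T}$. As a graph on $V$, $\mathcal{S}_0$ has an edge $\{p,q\}$ of weight $\lVert pq\rVert$ whenever some edge of $\mathcal{S}_0$ joins a cluster centered at $p$ to a cluster centered at $q\ne p$. *)

From mathcomp Require Import all_boot all_order all_algebra all_reals.
Set Implicit Arguments. Unset Strict Implicit. Unset Printing Implicit Defensive.
Import Order.TTheory GRing.Theory Num.Theory.
Local Open Scope ring_scope.

Definition edist (K : realType) (d : nat) (p q : 'rV[K]_d) : K :=
  Num.sqrt (\sum_(i < d) (p ord0 i - q ord0 i) ^+ 2).

(* a cluster: (center, level) *)
Notation cluster K d := ('rV[K]_d * int)%type.

(* A hierarchy (T, R) on V: [nodes] = the explicit clusters (distinct pairs),
   [root] the root, [par] the parent map (meaningful on non-root nodes). *)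
Definition is_hierarchy (K : realType) (d : nat) (R : K) (V : seq 'rV[K]_d)
    (nodes : seq (cluster K d)) (root : cluster K d)
    (par : cluster K d -> cluster K d) : Prop :=
  [/\ uniq nodes,
      root \in nodes,
      (forall c, c \in nodes -> c.1 \in V),
      (forall c, c \in nodes -> c != root ->
         [/\ par c \in nodes, (par c).2 = c.2 + 1
           & edist c.1 (par c).1 <= R ^ (c.2 + 1)]) &
      (forall p, p \in V -> exists l, (p, l) \in nodes)].

Definition is_child (K : realType) (d : nat) (nodes : seq (cluster K d))
    (root : cluster K d) (par : cluster K d -> cluster K d)
    (a b : cluster K d) : Prop :=
  [/\ b \in nodes, b != root & par b = a].

(* clusters of the hierarchy = explicit clusters and implicit ones *)
Definition is_cluster (K : realType) (d : nat) (nodes : seq (cluster K d))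
    (c : cluster K d) : Prop :=
  exists l : int, c.2 <= l /\ (c.1, l) \in nodes.

Definition separation (K : realType) (d : nat) (R : K)
    (nodes : seq (cluster K d)) : Prop :=
  forall (p q : 'rV[K]_d) (l : int),
    is_cluster nodes (p, l) -> is_cluster nodes (q, l) -> p != q ->
    R ^ l < edist p q.

Definition S0_cluster_edge (K : realType) (d : nat) (R lambda : K)
    (nodes : seq (cluster K d)) (root : cluster K d)
    (par : cluster K d -> cluster K d) (a b : cluster K d) : Prop :=
  [/\ is_cluster nodes a, is_cluster nodes b, a.2 = b.2, a.1 != b.1
    & edist a.1 b.1 <= lambda * R ^ a.2]
  \/
  (is_child nodes root par a b \/ is_child nodes root par b a).

Definition S0_edge (K : realType) (d : nat) (R lambda : K)
    (nodes : seq (cluster K d)) (root : cluster K d)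
    (par : cluster K d -> cluster K d) (p q : 'rV[K]_d) : Prop :=
  p != q /\ exists lp lq : int,
    S0_cluster_edge R lambda nodes root par (p, lp) (q, lq).

Fixpoint walk_ok (T : Type) (E : T -> T -> Prop) (x : T) (s : seq T) : Prop :=
  if s is y :: s' then E x y /\ walk_ok E y s' else True.

Fixpoint walk_len (T : Type) (K : realType) (w : T -> T -> K) (x : T)
    (s : seq T) : K :=
  if s is y :: s' then w x y + walk_len w y s' else 0.

Definition S0_dist_le (K : realType) (d : nat) (R lambda : K)
    (nodes : seq (cluster K d)) (root : cluster K d)
    (par : cluster K d -> cluster K d) (p q : 'rV[K]_d) (D : K) : Prop :=
  exists s : seq 'rV[K]_d,
    [/\ walk_ok (S0_edge R lambda nodes root par) p s,
        last p s = q
      & walk_len (@edist K d) p s <= D].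

From mathcomp Require Import all_boot all_order all_algebra all_reals.
From mathcomp Require Import ring lra zify.
Set Implicit Arguments. Unset Strict Implicit. Unset Printing Implicit Defensive.
Import Order.TTheory GRing.Theory Num.Theory.
Local Open Scope ring_scope.

(* A child lies within R^(k+1) of its parent at level k+1, so walking from a
   point up its chain of ancestors to level i costs at most
   sum_(k <= i) R^k = R^(i+1)/(R-1).  Choose i with R^i about
   eps |pq| (R-1)/(4R) and climb from p and from q: the two level-i ancestors
   are within 2R^(i+1)/(R-1) + |pq| <= lambda R^i of each other, so they
   coincide or are joined by a type I edge, and the detour costs at most
   4R^(i+1)/(R-1) <= eps |pq|.  If i is above the root level, both climbs end
   at the root. *)

Section EuclideanDistance.
Variables (K : realType) (d : nat).
Implicit Types (p q r : 'rV[K]_d) (u v : 'I_d -> K).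

Lemma sum_sqr_ge0 u : 0 <= \sum_i u i ^+ 2.
Proof. by apply: sumr_ge0 => i _; exact: sqr_ge0. Qed.

(* Lagrange's identity: the gap in Cauchy-Schwarz is half of
   [\sum_i \sum_j (u i * v j - u j * v i) ^+ 2]. *)
Lemma cauchy_schwarz u v :
  (\sum_i u i * v i) ^+ 2 <= (\sum_i u i ^+ 2) * (\sum_i v i ^+ 2).
Proof.
have gap_ge0 : 0 <= \sum_i \sum_j (u i * v j - u j * v i) ^+ 2.
  by apply: sumr_ge0 => i _; exact: sum_sqr_ge0.
suff : \sum_i \sum_j (u i * v j - u j * v i) ^+ 2 =
   2 * ((\sum_i u i ^+ 2) * (\sum_i v i ^+ 2) - (\sum_i u i * v i) ^+ 2).
  by lra.
transitivity (\sum_i (u i ^+ 2 * \sum_j v j ^+ 2 + v i ^+ 2 * \sum_j u j ^+ 2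
      - 2 * (u i * v i * \sum_j u j * v j))).
  apply: eq_bigr => i _; rewrite !mulr_sumr -!big_split -sumrB /=.
  by apply: eq_bigr => j _; ring.
by rewrite sumrB big_split /= -!mulr_suml -mulr_sumr -mulr_suml; ring.
Qed.

Lemma edist_ge0 p q : 0 <= edist p q.
Proof. exact: sqrtr_ge0. Qed.

Lemma edist_sym p q : edist p q = edist q p.
Proof. by rewrite /edist; congr Num.sqrt; apply: eq_bigr => i _; ring. Qed.

Lemma edistxx p : edist p p = 0.
Proof. by rewrite /edist big1 ?sqrtr0 // => i _; rewrite subrr expr0n. Qed.

Lemma edist_gt0 p q : p != q -> 0 < edist p q.
Proof.
move=> p_neq_q; rewrite lt_def edist_ge0 andbT sqrtr_eq0 -ltNge.
rewrite lt_def sum_sqr_ge0 andbT; apply: contra p_neq_q => /eqP sum_eq0.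
apply/eqP/rowP => i; apply/eqP; rewrite -subr_eq0 -sqrf_eq0; apply/eqP.
by apply: (psumr_eq0P (fun j _ => sqr_ge0 _) sum_eq0).
Qed.

Lemma edist_triangle p q r : edist p r <= edist p q + edist q r.
Proof.
rewrite /edist.
set u := fun i => p ord0 i - q ord0 i; set v := fun i => q ord0 i - r ord0 i.
have -> : \sum_(i < d) (p ord0 i - r ord0 i) ^+ 2 = \sum_i (u i + v i) ^+ 2.
  by apply: eq_bigr => i _; rewrite /u /v; congr (_ ^+ 2); ring.
have A0 := sum_sqr_ge0 u; have B0 := sum_sqr_ge0 v.
set A := \sum_i u i ^+ 2 in A0 *; set B := \sum_i v i ^+ 2 in B0 *.
have expand : \sum_i (u i + v i) ^+ 2 = A + B + 2 * \sum_i u i * v i.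
  by rewrite /A /B -big_split /= mulr_sumr -big_split /=; apply: eq_bigr => i _; ring.
have cross : \sum_i u i * v i <= Num.sqrt A * Num.sqrt B.
  rewrite -sqrtrM // (le_trans (ler_norm _)) //.
  by rewrite -sqrtr_sqr ler_sqrt ?mulr_ge0 // cauchy_schwarz.
have sA := sqrtr_ge0 A; have sB := sqrtr_ge0 B.
rewrite -(ger0_norm (addr_ge0 sA sB)) -sqrtr_sqr ler_sqrt ?sqr_ge0 // expand.
by rewrite sqrrD !sqr_sqrtr //; lra.
Qed.

End EuclideanDistance.

Section Walks.
Variables (T : Type) (K : realType) (E : T -> T -> Prop) (w : T -> T -> K).

Definition walk_le (x y : T) (L : K) : Prop :=
  exists s : seq T, [/\ walk_ok E x s, last x s = y & walk_len w x s <= L].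

Lemma walk_ok_cat x s t :
  walk_ok E x (s ++ t) <-> walk_ok E x s /\ walk_ok E (last x s) t.
Proof. by elim: s x => [|y s IH] x /=; [tauto | rewrite IH; tauto]. Qed.

Lemma walk_len_cat x s t :
  walk_len w x (s ++ t) = walk_len w x s + walk_len w (last x s) t.
Proof. by elim: s x => [|y s IH] x /=; rewrite ?add0r // IH addrA. Qed.

Lemma last_rev_belast (x : T) s : last (last x s) (rev (belast x s)) = x.
Proof. by case: s => //= y s; rewrite rev_cons last_rcons. Qed.

Lemma walk_le_refl x L : 0 <= L -> walk_le x x L.
Proof. by exists [::]. Qed.

Lemma walk_le_edge x y : E x y -> walk_le x y (w x y).
Proof. by exists [:: y]; rewrite /= addr0. Qed.

Lemma walk_le_trans x y z L1 L2 :
  walk_le x y L1 -> walk_le y z L2 -> walk_le x z (L1 + L2).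
Proof.
move=> [s [s_ok s_last s_len]] [t [t_ok t_last t_len]].
exists (s ++ t); rewrite last_cat walk_len_cat s_last; split=> //.
- by apply/walk_ok_cat; rewrite s_last.
- exact: lerD.
Qed.

Lemma walk_le_weaken x y L L' : L <= L' -> walk_le x y L -> walk_le x y L'.
Proof. by move=> le_L [s [? ? ?]]; exists s; split=> //; exact: le_trans le_L. Qed.

Hypothesis E_sym : forall x y, E x y -> E y x.
Hypothesis w_sym : forall x y, w x y = w y x.

Lemma walk_ok_rev x s : walk_ok E x s ->
  walk_ok E (last x s) (rev (belast x s)) /\
  walk_len w (last x s) (rev (belast x s)) = walk_len w x s.
Proof.
elim: s x => [|y s IH] x //= [Exy /IH [ok_rev len_rev]].
rewrite rev_cons -cats1 walk_len_cat last_rev_belast len_rev /= addr0 w_sym addrC.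
split=> //; apply/walk_ok_cat; rewrite last_rev_belast.
by split=> //; split=> //; exact: E_sym.
Qed.

Lemma walk_le_sym x y L : walk_le x y L -> walk_le y x L.
Proof.
move=> [s [/walk_ok_rev [ok_rev len_rev] <- s_len]].
by exists (rev (belast x s)); rewrite last_rev_belast len_rev.
Qed.

End Walks.

Lemma walk_le_edist (K : realType) (d : nat) (E : 'rV[K]_d -> 'rV[K]_d -> Prop)
    (x y : 'rV[K]_d) (L : K) :
  walk_le E (@edist K d) x y L -> edist x y <= L.
Proof.
move=> [s [_ <-]]; apply: le_trans.
elim: s x => [|z s IH] x /=; first by rewrite edistxx.
by rewrite (le_trans (edist_triangle x z _)) // lerD2l.
Qed.

Section GeometricLevels.
Variables (K : realType) (R : K).
Hypothesis R_gt1 : 1 < R.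

Let R_gt0 : 0 < R. Proof. exact: lt_trans R_gt1. Qed.
Let Rm1_gt0 : 0 < R - 1. Proof. by rewrite subr_gt0. Qed.

Lemma bernoulli_ineq (n : nat) : 1 + n%:R * (R - 1) <= R ^+ n.
Proof.
elim: n => [|n IH]; first by rewrite mul0r addr0 expr0.
have : 0 <= n%:R * (R - 1) by rewrite mulr_ge0 ?ler0n ?ltW.
by have := ltW Rm1_gt0; rewrite exprS -natr1; nra.
Qed.

Lemma exprn_unbounded (x : K) : exists n : nat, x < R ^+ n.
Proof.
have y_ge0 : 0 <= `|x| / (R - 1) by rewrite divr_ge0 ?normr_ge0 ?ltW.
exists (Num.bound (`|x| / (R - 1))).
move: (archi_boundP y_ge0) (bernoulli_ineq (Num.bound (`|x| / (R - 1)))).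
by rewrite ltr_pdivrMr //; have := ler_norm x; lra.
Qed.

Lemma exists_level (x : K) :
  0 < x -> exists i : int, R ^ i <= x /\ x < R ^ (i + 1).
Proof.
move=> x_gt0; have [n x_lt] := exprn_unbounded x.
have [m /ltW xV_le] := exprn_unbounded x^-1.
have x_ge : R ^ (- m%:Z) <= x.
  by rewrite -exprnN -[x]invrK lef_pV2 ?posrE ?exprn_gt0 ?invr_gt0.
suff search : forall (k : nat) (a : int), R ^ a <= x -> x < R ^ (a + k%:Z) ->
    exists i : int, R ^ i <= x /\ x < R ^ (i + 1).
  apply: (search (n + m)%N (- m%:Z)) => //.
  by have -> : - m%:Z + (n + m)%N = n by lia.
elim=> [|k IH] a a_le x_lt_a.
  by rewrite addr0 in x_lt_a; move: (lt_le_trans x_lt_a a_le); rewrite ltxx.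
have [x_lt_a1|x_ge_a1] := ltP x (R ^ (a + 1)); first by exists a.
by apply: (IH (a + 1)) => //; have -> : a + 1 + k = a + k.+1 by lia.
Qed.

(* [geom_bound j] is the sum of [R ^ k] over all integers [k <= j]: the total
   length of a chain of ancestors climbing up to level [j]. *)
Definition geom_bound (j : int) : K := R ^ (j + 1) / (R - 1).

Lemma geom_boundE j : geom_bound j = R ^ j * (R / (R - 1)).
Proof. by rewrite /geom_bound expfzDr ?gt_eqF // expr1z mulrA. Qed.

Lemma geom_bound_gt0 j : 0 < geom_bound j.
Proof. by rewrite divr_gt0 ?exprz_gt0. Qed.

Lemma geom_boundS j : geom_bound (j + 1) = geom_bound j + R ^ (j + 1).
Proof.
rewrite !geom_boundE expfzDr ?gt_eqF // expr1z.
by field; rewrite gt_eqF.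
Qed.

Lemma geom_bound_le j k : j <= k -> geom_bound j <= geom_bound k.
Proof.
move=> le_jk; rewrite ler_pM2r ?invr_gt0 //.
by apply: ler_weXz2l; rewrite ?lerD2r // ltW.
Qed.

Lemma geom_bound_level (eps D lambda : K) (i : int) :
  0 < eps -> 2 * (R / (R - 1)) + 4 * R * (R / (R - 1)) / eps <= lambda ->
  R ^ i <= eps * D / (4 * (R / (R - 1))) ->
  eps * D / (4 * (R / (R - 1))) < R ^ (i + 1) ->
  4 * geom_bound i <= eps * D /\ 2 * geom_bound i + D <= lambda * R ^ i.
Proof.
move=> eps_gt0 lambda_ge t_le t_gt; rewrite geom_boundE.
have k_gt0 : 0 < R / (R - 1) by rewrite divr_gt0.
have t_gt0 : 0 < R ^ i by rewrite exprz_gt0.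
move: t_le t_gt; set k := R / (R - 1) in k_gt0 lambda_ge *; set t := R ^ i in t_gt0 *.
have k4_gt0 : 0 < 4 * k by rewrite mulr_gt0.
rewrite expfzDr ?gt_eqF // expr1z -/t ler_pdivlMr // ltr_pdivrMr // => t_le t_gt.
have D_lt : D < 4 * R * k * t / eps by rewrite ltr_pdivlMr //; lra.
have : (2 * k + 4 * R * k / eps) * t <= lambda * t by rewrite ler_pM2r.
by split; lra.
Qed.

End GeometricLevels.

Section Hierarchy.
Variables (K : realType) (R lambda : K) (d : nat) (V : seq 'rV[K]_d)
  (nodes : seq (cluster K d)) (root : cluster K d) (par : cluster K d -> cluster K d).
Hypothesis R_gt1 : 1 < R.
Hypothesis hierarchyV : is_hierarchy R V nodes root par.
Implicit Types b c : cluster K d.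

Local Notation S0 := (S0_edge R lambda nodes root par).
Local Notation S0_walk_le := (walk_le S0 (@edist K d)).

Lemma parent_spec c : c \in nodes -> c != root ->
  [/\ par c \in nodes, (par c).2 = c.2 + 1 & edist c.1 (par c).1 <= R ^ (c.2 + 1)].
Proof. by case: hierarchyV => _ _ _ + _; apply. Qed.

Lemma node_level_bounded : exists M : int, forall c, c \in nodes -> c.2 <= M.
Proof.
exists (\sum_(c <- nodes) `|c.2|) => c c_in; rewrite (le_trans (ler_norm _)) //.
rewrite (bigD1_seq c) //=; last by case: hierarchyV.
by rewrite lerDl sumr_ge0.
Qed.

(* Levels strictly increase along the parent map and are bounded, so every
   chain of ancestors ends at the root. *)
Lemma node_level_lt_root c : c \in nodes -> c != root -> c.2 < root.2.
Proof.
have [M le_M] := node_level_bounded.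
suff climb (n : nat) b : b \in nodes -> M - b.2 <= n%:Z -> b != root -> b.2 < root.2.
  by move=> c_in; apply: (climb `|M - c.2|%N) => //; lia.
elim: n b => [|n IH] b b_in b_bound b_neq.
  by have [/le_M + + _] := parent_spec b_in b_neq; lia.
have [par_in par_level _] := parent_spec b_in b_neq.
have [<-|par_neq] := eqVneq (par b) root; first by rewrite par_level; lia.
by have := IH _ par_in ltac:(rewrite par_level; lia) par_neq; rewrite par_level; lia.
Qed.

Lemma node_top_level c : c \in nodes -> root.2 <= c.2 -> c = root.
Proof.
move=> c_in; have [//|c_neq] := eqVneq c root.
by have := node_level_lt_root c_in c_neq; lia.
Qed.

Lemma S0_edge_sym x y : S0 x y -> S0 y x.
Proof.
move=> [x_neq [lx [ly [[cx cy /= lxy xy_neq xy_le]|[child|child]]]]].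
all: split; [by rewrite eq_sym | exists ly, lx].
- by left; split=> //=; [rewrite eq_sym | rewrite edist_sym -lxy].
- by right; right.
- by right; left.
Qed.

Lemma S0_edge_parent c : c \in nodes -> c != root -> c.1 != (par c).1 ->
  S0 c.1 (par c).1.
Proof.
case: c => x l c_in c_neq x_neq; split=> //; exists l, (par (x, l)).2.
by right; right; rewrite -surjective_pairing.
Qed.

Lemma S0_walk_le_sym x y L : S0_walk_le x y L -> S0_walk_le y x L.
Proof. exact/walk_le_sym/edist_sym/S0_edge_sym. Qed.

Lemma S0_climb_ancestors (n : nat) x l : (x, l) \in nodes -> l + n <= root.2 ->
  exists y, (y, l + n) \in nodes /\
    S0_walk_le x y (geom_bound R (l + n) - geom_bound R l).
Proof.
elim: n x l => [|n IH] x l c_in l_le.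
  by exists x; rewrite addr0 subrr; split=> //; exact: walk_le_refl.
have c_neq : (x, l) != root by apply: contraTneq l_le => <- /=; lia.
move: (parent_spec c_in c_neq) (S0_edge_parent c_in c_neq).
case: (par (x, l)) => [x1 l1] /= [par_in l1_eq par_dist] step; subst l1.
have [|y [y_in walk_y]] := IH x1 (l + 1) par_in; first by lia.
have -> : l + n.+1 = l + 1 + n by lia.
exists y; split=> //.
have -> : geom_bound R (l + 1 + n) - geom_bound R l =
    R ^ (l + 1) + (geom_bound R (l + 1 + n) - geom_bound R (l + 1)).
  by rewrite geom_boundS //; ring.
apply: (walk_le_trans _ walk_y); have [<-|x_neq] := eqVneq x x1.
- by apply: walk_le_refl; rewrite ltW // exprz_gt0 // (lt_trans ltr01).
- exact: walk_le_weaken par_dist (walk_le_edge _ (step x_neq)).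
Qed.

Lemma S0_climb_to_level p j : p \in V -> j <= root.2 ->
  exists y l, [/\ (y, l) \in nodes, j <= l & S0_walk_le p y (geom_bound R j)].
Proof.
move=> p_in j_le; case: hierarchyV => _ _ _ _ /(_ p p_in) [l c_in].
have [j_le_l|l_lt_j] := leP j l.
  by exists p, l; split=> //; apply/walk_le_refl/ltW/geom_bound_gt0.
have [|y [y_in walk_y]] := S0_climb_ancestors (n := `|j - l|%N) c_in; first by lia.
have l_add : l + `|j - l|%N = j by lia.
rewrite l_add in y_in walk_y; exists y, j; split=> //.
by apply: walk_le_weaken walk_y; have := geom_bound_gt0 R_gt1 l; lra.
Qed.

Lemma S0_climb_to_root p : p \in V -> S0_walk_le p root.1 (geom_bound R root.2).
Proof.
move=> p_in; have [y [l [c_in l_ge walk_y]]] := S0_climb_to_level p_in (lexx root.2).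
by have -> : root.1 = y by rewrite -(node_top_level c_in l_ge).
Qed.

Lemma S0_walk_le_level (i : int) p q : p \in V -> q \in V ->
  2 * geom_bound R i + edist p q <= lambda * R ^ i ->
  S0_walk_le p q (4 * geom_bound R i + edist p q).
Proof.
move=> p_in q_in lambda_ge.
have B_gt0 := geom_bound_gt0 R_gt1 i; have D_ge0 := edist_ge0 p q.
have [i_le|root_lt] := leP i root.2; last first.
  have B_le := geom_bound_le R_gt1 (ltW root_lt).
  have walk_pq := walk_le_trans (S0_climb_to_root p_in)
                                (S0_walk_le_sym (S0_climb_to_root q_in)).
  by apply: walk_le_weaken walk_pq; lra.
have [yp [lp [yp_in lp_ge walk_p]]] := S0_climb_to_level p_in i_le.
have [yq [lq [yq_in lq_ge /S0_walk_le_sym walk_q]]] := S0_climb_to_level q_in i_le.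
have [yp_eq|y_neq] := eqVneq yp yq.
  rewrite -yp_eq in walk_q.
  by apply: walk_le_weaken (walk_le_trans walk_p walk_q); lra.
have y_dist : edist yp yq <= 2 * geom_bound R i + edist p q.
  have := walk_le_edist walk_p; have := walk_le_edist walk_q.
  have := edist_triangle yp p yq; have := edist_triangle p q yq.
  by rewrite (edist_sym yp p) (edist_sym q yq); lra.
have edge : S0 yp yq.
  split=> //; exists i, i; left; split=> //; [exists lp | exists lq |] => //.
  exact: le_trans lambda_ge.
have walk_pq := walk_le_trans walk_p (walk_le_trans (walk_le_edge _ edge) walk_q).
by apply: walk_le_weaken walk_pq; lra.
Qed.

End Hierarchy.

Theorem lemma3 (K : realType) (R : K) (hR : 1 < R) :
  exists C : K, 0 < C /\
  forall eps : K, 0 < eps ->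
  exists lambda0 : K, lambda0 <= C * (1 + eps^-1) /\
  forall lambda : K, lambda0 <= lambda ->
  forall (d : nat) (V : seq 'rV[K]_d), V != [::] ->
  forall (nodes : seq ('rV[K]_d * int)) (root : 'rV[K]_d * int)
         (par : 'rV[K]_d * int -> 'rV[K]_d * int),
    is_hierarchy R V nodes root par ->
    separation R nodes ->
    forall p q : 'rV[K]_d, p \in V -> q \in V ->
      S0_dist_le R lambda nodes root par p q ((1 + eps) * edist p q).
Proof.
have R_gt0 : 0 < R := lt_trans ltr01 hR.
have k_gt0 : 0 < R / (R - 1) by rewrite divr_gt0 // subr_gt0.
set k := R / (R - 1) in k_gt0 *.
have Rk_gt0 := mulr_gt0 R_gt0 k_gt0.
exists (4 * R * k); split; first by lra.
move=> eps eps_gt0; exists (2 * k + 4 * R * k / eps); split.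
  have : 2 * k <= 4 * R * k by nra.
  by lra.
move=> lambda lambda_ge d V _ nodes root par hierarchyV _ p q p_in q_in.
have [<-|pq_neq] := eqVneq p q.
  by apply: walk_le_refl; rewrite edistxx mulr0.
have x_gt0 : 0 < eps * edist p q / (4 * k).
  by apply: divr_gt0; [rewrite mulr_gt0 ?edist_gt0 | lra].
have [i [t_le t_gt]] := exists_level hR x_gt0.
have [B_le level_ok] := geom_bound_level hR eps_gt0 lambda_ge t_le t_gt.
apply: walk_le_weaken (S0_walk_le_level hR hierarchyV p_in q_in level_ok).
by lra.
Qed.
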